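(* Let $0<\varepsilon\le1$, $\gamma>1$, $\Delta t>0$. Consider the first order semi-implicit (IMEX) time discretization of the Euler equations $U^{n+1}=U^n-\Delta t\,\nabla\cdot\hat F(U^n)-\Delta t\,\nabla\cdot\tilde F(U^{n+1})$, written as the explicit non-stiff step $$\widehat\rho=\rho^n-\Delta t\,\nabla\cdot(\rho\mathbf u)^n,\quad \widehat{\rho\mathbf u}=(\rho\mathbf u)^n-\Delta t\,\nabla\cdot(\rho\mathbf u\otimes\mathbf u+p\,\mathrm{Id})^n,\quad \widehat{\rho E}=(\rho E)^n-\Delta t\,\nabla\cdot\big((\rho E+\Pi)^n\mathbf u^n\big),$$ followed by the implicit stiff step $$\rho^{n+1}=\widehat\rho,\quad (\rho\mathbf u)^{n+1}=\widehat{\rho\mathbf u}-\frac{1-\varepsilon^2}{\varepsilon^2}\Delta t\,\nabla p^{n+1},\quad (\rho E)^{n+1}=\widehat{\rho E}-(1-\varepsilon^2)\Delta t\,\nabla\cdot\big((p-p_\infty)\mathbf u\big)^{n+1}.$$ Set $\widehat{\mathbf u}=\widehat{\rho\mathbf u}/\widehat\rho$ and $\widehat p=(\gamma-1)(\widehat{\rho E}-\frac{\varepsilon^2}{2}\widehat\rho\|\widehat{\mathbf u}\|^2)$. Then this scheme is equivalent to the explicit step above, the implicit mass and momentum updates above, and the nonlinear elliptic pressure equation $$-\frac{(1-\varepsilon^2)^2}{\varepsilon^2}\Delta t^2\,\nabla\cdot\Big(\frac{(p-p_\infty)^{n+1}}{\widehat\rho}\nabla p^{n+1}\Big)+\frac{p^{n+1}}{\gamma-1}=-\frac{(1-\varepsilon^2)^2}{2\varepsilon^2}\frac{\Delta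 t^2}{\widehat\rho}\|\nabla p^{n+1}\|^2-(1-\varepsilon^2)\Delta t\,(p-p_\infty)^{n+1}\nabla\cdot\widehat{\mathbf u}+\frac{\widehat p}{\gamma-1}.$$
   Context: Nondimensionalised Euler equations $U_t+\nabla\cdot F(U)=0$ in $\mathbb R^d$ with $U=(\rho,\rho\mathbf u,\rho E)$, $F(U)=(\rho\mathbf u,\rho\mathbf u\otimes\mathbf u+\frac{p}{\varepsilon^2}\mathrm{Id},(\rho E+p)\mathbf u)$, equation of state $p=(\gamma-1)(\rho E-\frac{\varepsilon^2}{2}\rho\|\mathbf u\|^2)$, reference Mach number $0<\varepsilon\le1$. Flux splitting $F=\hat F+\tilde F$ with $\hat F(U)=(\rho\mathbf u,\rho\mathbf u\otimes\mathbf u+p\,\mathrm{Id},(\rho E+\Pi)\mathbf u)$, $\tilde F(U)=(0,\frac{1-\varepsilon^2}{\varepsilon^2}p\,\mathrm{Id},(p-\Pi)\mathbf u)$, where $\Pi=\varepsilon^2p+(1-\varepsilon^2)p_\infty$ and the reference pressure is $p_\infty(t)=\inf_{\mathbf x}p(\mathbf x,t)$ (so $p-\Pi=(1-\varepsilon^2)(p-p_\infty)$). Superscripts $n$, $n+1$ denote time levels $t^n$, $t^{n+1}=t^n+\Delta t$. *)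

From HB Require Import structures.
From mathcomp Require Import all_boot all_order all_algebra.
From mathcomp Require Import all_classical all_reals all_analysis.
Set Implicit Arguments. Unset Strict Implicit. Unset Printing Implicit Defensive.
Import Order.TTheory GRing.Theory Num.Theory.
Import numFieldNormedType.Exports.
Local Open Scope ring_scope.
Local Open Scope classical_set_scope.

Section EulerDefs.
Variables (R : realType) (d : nat).
Notation V := 'rV[R]_d.

Definition ev (i : 'I_d) : V := delta_mx 0 i.
Definition pd (f : V -> R) (i : 'I_d) (x : V) : R := derive f x (ev i).
Definition grad (f : V -> R) (x : V) : V := \row_i pd f i x.
Definition divg (F : V -> V) (x : V) : R := \sum_(i < d) pd (fun y => F y 0 i) i x.
Definition divT (M : V -> 'M[R]_d) (x : V) : V :=
  \row_i \sum_(j < d) pd (fun y => M y i j) j x.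
Definition dotv (u v : V) : R := \sum_(i < d) u 0 i * v 0 i.
Definition sqnorm (u : V) : R := dotv u u.

Definition vel (rho : V -> R) (m : V -> V) (x : V) : V := (rho x)^-1 *: m x.
Definition pressure (gamma eps : R) (rho : V -> R) (m : V -> V) (E : V -> R)
  (x : V) : R :=
  (gamma - 1) * (E x - eps ^+ 2 / 2 * rho x * sqnorm (vel rho m x)).
Definition pinf (p : V -> R) : R := inf (range p).
Definition Pi (eps : R) (p : V -> R) (x : V) : R :=
  eps ^+ 2 * p x + (1 - eps ^+ 2) * pinf p.

Definition explicit_step (gamma eps dt : R)
  (rho0 : V -> R) (m0 : V -> V) (E0 : V -> R)
  (rhoh : V -> R) (mh : V -> V) (Eh : V -> R) : Prop :=
  let p0 := pressure gamma eps rho0 m0 E0 in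
  let u0 := vel rho0 m0 in
  forall x,
    [/\ rhoh x = rho0 x - dt * divg m0 x,
        mh x = m0 x - dt *: divT (fun y =>
                 \matrix_(i, j) (rho0 y * u0 y 0 i * u0 y 0 j) + p0 y *: 1%:M) x
      & Eh x = E0 x - dt * divg (fun y => (E0 y + Pi eps p0 y) *: u0 y) x].

Definition implicit_mass_momentum (gamma eps dt : R)
  (rhoh : V -> R) (mh : V -> V) (Eh : V -> R)
  (rho1 : V -> R) (m1 : V -> V) (E1 : V -> R) : Prop :=
  let p1 := pressure gamma eps rho1 m1 E1 in
  forall x,
    rho1 x = rhoh x /\
    m1 x = mh x - ((1 - eps ^+ 2) / eps ^+ 2 * dt) *: grad p1 x.

Definition implicit_energy (gamma eps dt : R)
  (rhoh : V -> R) (mh : V -> V) (Eh : V -> R)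
  (rho1 : V -> R) (m1 : V -> V) (E1 : V -> R) : Prop :=
  let p1 := pressure gamma eps rho1 m1 E1 in
  forall x,
    E1 x = Eh x - (1 - eps ^+ 2) * dt *
             divg (fun y => (p1 y - pinf p1) *: vel rho1 m1 y) x.

Definition pressure_equation (gamma eps dt : R)
  (rhoh : V -> R) (mh : V -> V) (Eh : V -> R)
  (rho1 : V -> R) (m1 : V -> V) (E1 : V -> R) : Prop :=
  let p1 := pressure gamma eps rho1 m1 E1 in
  let ph := pressure gamma eps rhoh mh Eh in
  forall x,
    - ((1 - eps ^+ 2) ^+ 2 / eps ^+ 2 * dt ^+ 2) *
        divg (fun y => ((p1 y - pinf p1) / rhoh y) *: grad p1 y) x
      + p1 x / (gamma - 1)
    = - ((1 - eps ^+ 2) ^+ 2 / (2 * eps ^+ 2)) * (dt ^+ 2 / rhoh x)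
          * sqnorm (grad p1 x)
      - (1 - eps ^+ 2) * dt * (p1 x - pinf p1) * divg (vel rhoh mh) x
      + ph x / (gamma - 1).

End EulerDefs.

From HB Require Import structures.
From mathcomp Require Import all_boot all_order all_algebra.
From mathcomp Require Import all_classical all_reals all_analysis.
From mathcomp Require Import ring.
Import Order.TTheory GRing.Theory Num.Theory.
Import numFieldNormedType.Exports.
Local Open Scope ring_scope.

(* With c = (1 - eps^2) dt / eps^2, the implicit mass and momentum updates give
   the new velocity u = u_hat - (c / rho_hat) grad p.  The product rule splits
   the energy flux divergence div ((p - p_inf) u) into
   (p - p_inf) div u_hat + grad p . u_hat - c div ((p - p_inf) / rho_hat grad p),
   while expanding |u|^2 in rho E = p / (gamma - 1) + eps^2 / 2 rho |u|^2 produces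
   the same cross term grad p . u_hat with the opposite sign.  After this
   cancellation the implicit energy update and the pressure equation differ, at
   every point, by the same algebraic defect, so one holds iff the other does. *)

Section VectorCalculus.
Variables (R : realType) (d : nat).
Local Notation V := 'rV[R]_d.
Local Notation ev := (@ev R d).

Lemma derivable_row_coord (F : V -> V) x v (i : 'I_d) :
  differentiable F x -> derivable (fun y => F y 0 i) x v.
Proof. by move=> /(@diff_derivable _ _ _ F x v) /derivable_mxP; apply. Qed.

Lemma grad_subr_cst (f : V -> R) (k : R) x :
  (forall i, derivable f x (ev i)) -> grad (fun y => f y - k) x = grad f x.
Proof.
move=> df; apply/rowP => i; rewrite !mxE /pd.
by rewrite (deriveB (df i) (derivable_cst k _ _)) derive_cst subr0.
Qed.

Lemma divgB (F G : V -> V) x :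
  (forall i, derivable (fun y => F y 0 i) x (ev i)) ->
  (forall i, derivable (fun y => G y 0 i) x (ev i)) ->
  divg (fun y => F y - G y) x = divg F x - divg G x.
Proof.
move=> dF dG; rewrite /divg -sumrB; apply: eq_bigr => i _.
have -> : (fun y => (F y - G y) 0 i) = (fun y => F y 0 i) - (fun y => G y 0 i).
  by apply: funext => y; rewrite !mxE.
exact: deriveB.
Qed.

Lemma divgZ (k : R) (F : V -> V) x :
  (forall i, derivable (fun y => F y 0 i) x (ev i)) ->
  divg (fun y => k *: F y) x = k * divg F x.
Proof.
move=> dF; rewrite /divg mulr_sumr; apply: eq_bigr => i _.
have -> : (fun y => (k *: F y) 0 i) = k \*o (fun y => F y 0 i).
  by apply: funext => y; rewrite !mxE.
exact: deriveMl.
Qed.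

Lemma divg_scale (f : V -> R) (F : V -> V) x :
  (forall i, derivable f x (ev i)) ->
  (forall i, derivable (fun y => F y 0 i) x (ev i)) ->
  divg (fun y => f y *: F y) x = f x * divg F x + dotv (grad f x) (F x).
Proof.
move=> df dF; rewrite /divg /dotv mulr_sumr -big_split; apply: eq_bigr => i _.
have -> : (fun y => (f y *: F y) 0 i) = f * (fun y => F y 0 i).
  by apply: funext => y; rewrite !mxE.
by rewrite /pd deriveM // mxE [pd f i x * _]mulrC.
Qed.

Lemma sqnorm_subZ (a b : V) (k : R) :
  sqnorm (a - k *: b) = sqnorm a - 2 * k * dotv b a + k ^+ 2 * sqnorm b.
Proof.
rewrite /sqnorm /dotv !mulr_sumr -sumrB -big_split /=.
by apply: eq_bigr => i _; rewrite !mxE; ring.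
Qed.

Lemma vel_subZ (rho : V -> R) (m g : V -> V) (k : R) :
  vel rho (fun y => m y - k *: g y) = fun y => vel rho m y - (k / rho y) *: g y.
Proof.
by apply: funext => y; apply/rowP => j; rewrite /vel !mxE; ring.
Qed.

End VectorCalculus.

Lemma energy_update_iff_pressure_update (R : realFieldType)
    (eps gamma dt r p pinf divu gradp_u N U2 K E1 Eh W : R) :
  eps != 0 -> gamma != 1 -> r != 0 ->
  p = (gamma - 1) * (E1 - eps ^+ 2 / 2 * r * W) ->
  W = U2 - 2 * ((1 - eps ^+ 2) / eps ^+ 2 * dt / r) * gradp_u
      + ((1 - eps ^+ 2) / eps ^+ 2 * dt / r) ^+ 2 * N ->
  (E1 = Eh - (1 - eps ^+ 2) * dt *
          ((p - pinf) * divu + gradp_u - (1 - eps ^+ 2) / eps ^+ 2 * dt * K)) <->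
  (- ((1 - eps ^+ 2) ^+ 2 / eps ^+ 2 * dt ^+ 2) * K + p / (gamma - 1)
     = - ((1 - eps ^+ 2) ^+ 2 / (2 * eps ^+ 2)) * (dt ^+ 2 / r) * N
       - (1 - eps ^+ 2) * dt * (p - pinf) * divu
       + (gamma - 1) * (Eh - eps ^+ 2 / 2 * r * U2) / (gamma - 1)).
Proof.
move=> eps0 gamma1 r0 -> ->.
have gamma10 : gamma - 1 != 0 by rewrite subr_eq0.
set lhsE := (X in X = _ <-> _); set rhsE := (X in _ = X <-> _).
set lhsP := (X in _ <-> X = _); set rhsP := (X in _ <-> _ = X).
have same_defect : lhsP - rhsP = lhsE - rhsE.
  by rewrite /lhsP /rhsP /lhsE /rhsE; field; rewrite eps0 gamma10 r0.
split=> H; apply/eqP; rewrite -subr_eq0.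
  by rewrite same_defect H subrr.
by rewrite -same_defect H subrr.
Qed.

Section ImplicitStep.
Context {R : realType} {d : nat} {eps gamma dt : R}.
Context {rhoh : 'rV[R]_d -> R} {mh : 'rV[R]_d -> 'rV[R]_d} {Eh : 'rV[R]_d -> R}.
Context {rho1 : 'rV[R]_d -> R} {m1 : 'rV[R]_d -> 'rV[R]_d} {E1 : 'rV[R]_d -> R}.
Local Notation ev := (@ev R d).
Local Notation p1 := (pressure gamma eps rho1 m1 E1).
Local Notation P := (pinf p1).
Local Notation c := ((1 - eps ^+ 2) / eps ^+ 2 * dt).

Hypothesis rhoh_neq0 : forall x, rhoh x != 0.
Hypothesis rhoh_diff : forall x, differentiable rhoh x.
Hypothesis mh_diff : forall x, differentiable mh x.
Hypothesis p1_diff : forall x, differentiable p1 x.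
Hypothesis p1_diff2 : forall i x, differentiable (pd p1 i) x.
Hypothesis mass_momentum : implicit_mass_momentum gamma eps dt rhoh mh Eh rho1 m1 E1.

Lemma vel_implicit : vel rho1 m1 = fun y => vel rhoh mh y - (c / rhoh y) *: grad p1 y.
Proof.
rewrite -vel_subZ; apply: funext => y.
by rewrite /vel (mass_momentum y).1 (mass_momentum y).2.
Qed.

Lemma divg_pressure_flux x :
  divg (fun y => (p1 y - P) *: vel rho1 m1 y) x =
    (p1 x - P) * divg (vel rhoh mh) x + dotv (grad p1 x) (vel rhoh mh x)
    - c * divg (fun y => ((p1 y - P) / rhoh y) *: grad p1 y) x.
Proof.
have dp1 i : derivable p1 x (ev i) by exact: diff_derivable.
have dp1P i : derivable (fun y => p1 y - P) x (ev i).
  by apply: derivableB; [exact: dp1 | exact: derivable_cst].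
have drhoV i : derivable (fun y => (rhoh y)^-1) x (ev i).
  by apply: derivableV; [exact: rhoh_neq0 | exact: diff_derivable].
have du i : derivable (fun y => vel rhoh mh y 0 i) x (ev i).
  have -> : (fun y => vel rhoh mh y 0 i) = (fun y => (rhoh y)^-1) * (fun y => mh y 0 i).
    by apply: funext => y; rewrite /vel !mxE.
  by apply: derivableM; [exact: drhoV | exact: derivable_row_coord].
have dK i : derivable (fun y => (((p1 y - P) / rhoh y) *: grad p1 y) 0 i) x (ev i).
  have -> : (fun y => (((p1 y - P) / rhoh y) *: grad p1 y) 0 i)
          = (fun y => p1 y - P) * (fun y => (rhoh y)^-1) * pd p1 i.
    by apply: funext => y; rewrite !mxE.
  by apply: derivableM; [exact: derivableM | exact: diff_derivable].
have dflux i : derivable (fun y => ((p1 y - P) *: vel rhoh mh y) 0 i) x (ev i).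
  have -> : (fun y => ((p1 y - P) *: vel rhoh mh y) 0 i)
          = (fun y => p1 y - P) * (fun y => vel rhoh mh y 0 i).
    by apply: funext => y; rewrite [LHS]mxE.
  exact: derivableM.
have dcK i : derivable (fun y => (c *: (((p1 y - P) / rhoh y) *: grad p1 y)) 0 i) x (ev i).
  have -> : (fun y => (c *: (((p1 y - P) / rhoh y) *: grad p1 y)) 0 i)
          = c \*o (fun y => (((p1 y - P) / rhoh y) *: grad p1 y) 0 i).
    by apply: funext => y; rewrite [LHS]mxE.
  exact: derivableZ.
have -> : (fun y => (p1 y - P) *: vel rho1 m1 y) = fun y =>
    (p1 y - P) *: vel rhoh mh y - c *: (((p1 y - P) / rhoh y) *: grad p1 y).
  by rewrite vel_implicit; apply: funext => y; rewrite scalerBr !scalerA mulrCA.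
by rewrite divgB // divgZ // divg_scale // grad_subr_cst.
Qed.

Hypothesis eps_neq0 : eps != 0.
Hypothesis gamma_neq1 : gamma != 1.

Lemma implicit_energy_iff_pressure_equation :
  implicit_energy gamma eps dt rhoh mh Eh rho1 m1 E1 <->
  pressure_equation gamma eps dt rhoh mh Eh rho1 m1 E1.
Proof.
have pointwise x :
    (E1 x = Eh x - (1 - eps ^+ 2) * dt *
              divg (fun y => (p1 y - P) *: vel rho1 m1 y) x) <->
    (- ((1 - eps ^+ 2) ^+ 2 / eps ^+ 2 * dt ^+ 2) *
        divg (fun y => ((p1 y - P) / rhoh y) *: grad p1 y) x
      + p1 x / (gamma - 1)
     = - ((1 - eps ^+ 2) ^+ 2 / (2 * eps ^+ 2)) * (dt ^+ 2 / rhoh x)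
          * sqnorm (grad p1 x)
       - (1 - eps ^+ 2) * dt * (p1 x - P) * divg (vel rhoh mh) x
       + pressure gamma eps rhoh mh Eh x / (gamma - 1)).
  rewrite divg_pressure_flux.
  apply: (@energy_update_iff_pressure_update _ eps gamma dt (rhoh x) (p1 x) P _ _ _ _ _
    (E1 x) (Eh x) (sqnorm (vel rho1 m1 x))) => //.
    by rewrite /pressure (mass_momentum x).1.
  by rewrite vel_implicit sqnorm_subZ.
rewrite /implicit_energy /pressure_equation /=.
by split=> H x; apply/pointwise; exact: H.
Qed.

End ImplicitStep.

Theorem lemma3p1 (R : realType) (d : nat) (eps gamma dt : R)
  (rho0 : 'rV[R]_d -> R) (m0 : 'rV[R]_d -> 'rV[R]_d) (E0 : 'rV[R]_d -> R)
  (rhoh : 'rV[R]_d -> R) (mh : 'rV[R]_d -> 'rV[R]_d) (Eh : 'rV[R]_d -> R)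
  (rho1 : 'rV[R]_d -> R) (m1 : 'rV[R]_d -> 'rV[R]_d) (E1 : 'rV[R]_d -> R)
  (heps0 : 0 < eps) (heps1 : eps <= 1) (hgamma : 1 < gamma) (hdt : 0 < dt)
  (hrhoh : forall x, 0 < rhoh x)
  (hrhoh_diff : forall x, differentiable rhoh x)
  (hmh_diff : forall x, differentiable mh x)
  (hp1_diff : forall x, differentiable (pressure gamma eps rho1 m1 E1) x)
  (hp1_diff2 : forall (i : 'I_d) x,
      differentiable (pd (pressure gamma eps rho1 m1 E1) i) x) :
  (explicit_step gamma eps dt rho0 m0 E0 rhoh mh Eh /\
   implicit_mass_momentum gamma eps dt rhoh mh Eh rho1 m1 E1 /\
   implicit_energy gamma eps dt rhoh mh Eh rho1 m1 E1)
  <->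
  (explicit_step gamma eps dt rho0 m0 E0 rhoh mh Eh /\
   implicit_mass_momentum gamma eps dt rhoh mh Eh rho1 m1 E1 /\
   pressure_equation gamma eps dt rhoh mh Eh rho1 m1 E1).
Proof.
have rhoh_neq0 x : rhoh x != 0 by rewrite gt_eqF.
have eps_neq0 : eps != 0 by rewrite gt_eqF.
have gamma_neq1 : gamma != 1 by rewrite gt_eqF.
have step_equiv :
    implicit_mass_momentum gamma eps dt rhoh mh Eh rho1 m1 E1 ->
    implicit_energy gamma eps dt rhoh mh Eh rho1 m1 E1 <->
    pressure_equation gamma eps dt rhoh mh Eh rho1 m1 E1.
  by move=> mass_momentum; apply: implicit_energy_iff_pressure_equation.
split=> -[explicit [mass_momentum step]]; do 2 split=> //.
  exact/(step_equiv mass_momentum).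
exact/(step_equiv mass_momentum).
Qed.
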